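(* Let $F$ be a closed convex subset of a real Hilbert space $\mathcal H$ and let $(T_n)_{n\ge0}$ be an $F$-coherent sequence in $\mathcal U_F$. Then: (i) If $F\neq\emptyset$, then for every $\varepsilon\in(0,1]$ and every $x_0\in\mathcal H$, the sequence $x_{n+1}=x_n+(2-\varepsilon)(T_nx_n-x_n)$ converges weakly to a point of $F$. (ii) For $x_0\in\mathcal H$, consider the iteration $x_{n+1}=Q(x_0,x_n,T_nx_n)$, which terminates at step $n$ if $H(x_0,x_n)\cap H(x_n,T_nx_n)=\emptyset$. Exactly one of the following holds: (a) $F\neq\emptyset$ and $x_n\to P_Fx_0$ strongly; (b) $F=\emptyset$ and $\|x_n\|\to+\infty$; (c) $F=\emptyset$ and the iteration terminates.
   Context: For $x,y\in\mathcal H$, $H(x,y)=\{z\in\mathcal H:\ \langle z-y,x-y\rangle\le0\}$; $Q(x,y,z)$ is the metric projection of $x$ onto $H(x,y)\cap H(y,z)$. $\mathcal U_F$ is the set of maps $T:\mathcal H\to\mathcal H$ with $F\subset H(x,Tx)$ for every $x\in\mathcal H$. A sequence $(T_n)\subset\mathcal U_F$ is $F$-coherent if for every bounded sequence $(z_n)$ in $\mathcal H$ with $\sum_n\|z_{n+1}-z_n\|^2<\infty$ and $\sum_n\|z_n-T_nz_n\|^2<\infty$, every weak cluster point of $(z_n)$ lies in $F$. $P_F$ is the metric projection onto $F$. *)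

From Stdlib Require Import Reals.
Open Scope R_scope.

Record Hilbert := {
  hcar :> Type;
  hzero : hcar;
  hadd : hcar -> hcar -> hcar;
  hopp : hcar -> hcar;
  hscal : R -> hcar -> hcar;
  hinner : hcar -> hcar -> R;
  hadd_assoc : forall x y z, hadd x (hadd y z) = hadd (hadd x y) z;
  hadd_comm : forall x y, hadd x y = hadd y x;
  hadd_zero : forall x, hadd x hzero = x;
  hadd_opp : forall x, hadd x (hopp x) = hzero;
  hscal_one : forall x, hscal 1 x = x;
  hscal_assoc : forall a b x, hscal a (hscal b x) = hscal (a * b) x;
  hscal_distr_r : forall a x y, hscal a (hadd x y) = hadd (hscal a x) (hscal a y);
  hscal_distr_l : forall a b x, hscal (a + b) x = hadd (hscal a x) (hscal b x);
  hinner_sym : forall x y, hinner x y = hinner y x;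
  hinner_add : forall x y z, hinner (hadd x y) z = hinner x z + hinner y z;
  hinner_scal : forall a x y, hinner (hscal a x) y = a * hinner x y;
  hinner_pos : forall x, 0 <= hinner x x;
  hinner_def : forall x, hinner x x = 0 -> x = hzero;
  hcomplete : forall u : nat -> hcar,
    (forall eps, eps > 0 -> exists N, forall m n, (m >= N)%nat -> (n >= N)%nat ->
        sqrt (hinner (hadd (u m) (hopp (u n))) (hadd (u m) (hopp (u n)))) < eps) ->
    exists l, forall eps, eps > 0 -> exists N, forall n, (n >= N)%nat ->
        sqrt (hinner (hadd (u n) (hopp l)) (hadd (u n) (hopp l))) < eps
}.

Arguments hzero {h}.
Arguments hadd {h}.
Arguments hopp {h}.
Arguments hscal {h}.
Arguments hinner {h}.

Section Defs.
Context {X : Hilbert}.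

Definition hsub (x y : X) : X := hadd x (hopp y).
Definition hnorm (x : X) : R := sqrt (hinner x x).

Definition strong_cv (u : nat -> X) (l : X) : Prop :=
  Un_cv (fun n => hnorm (hsub (u n) l)) 0.

Definition weak_cv (u : nat -> X) (l : X) : Prop :=
  forall w : X, Un_cv (fun n => hinner (u n) w) (hinner l w).

Definition weak_cluster_point (u : nat -> X) (y : X) : Prop :=
  exists phi : nat -> nat, (forall n, (phi n < phi (S n))%nat) /\
    weak_cv (fun n => u (phi n)) y.

Definition hbounded_seq (u : nat -> X) : Prop :=
  exists M, forall n, hnorm (u n) <= M.

Definition summable (s : nat -> R) : Prop := exists l, infinite_sum s l.

Definition hclosed_set (F : X -> Prop) : Prop :=
  forall (u : nat -> X) (l : X), (forall n, F (u n)) -> strong_cv u l -> F l.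

Definition hconvex_set (F : X -> Prop) : Prop :=
  forall x y t, F x -> F y -> 0 <= t <= 1 ->
    F (hadd (hscal (1 - t) x) (hscal t y)).

Definition Hs (x y : X) (z : X) : Prop := hinner (hsub z y) (hsub x y) <= 0.

Definition is_proj (C : X -> Prop) (x p : X) : Prop :=
  C p /\ forall q, C q -> hnorm (hsub x p) <= hnorm (hsub x q).

Definition is_Q (x y z p : X) : Prop :=
  is_proj (fun w => Hs x y w /\ Hs y z w) x p.

Definition in_UF (F : X -> Prop) (T : X -> X) : Prop :=
  forall x z, F z -> Hs x (T x) z.

Definition coherent (F : X -> Prop) (T : nat -> X -> X) : Prop :=
  (forall n, in_UF F (T n)) /\
  forall z : nat -> X,
    hbounded_seq z ->
    summable (fun n => hnorm (hsub (z (S n)) (z n)) ^ 2) ->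
    summable (fun n => hnorm (hsub (z n) (T n (z n))) ^ 2) ->
    forall y, weak_cluster_point z y -> F y.

(* A run of the iteration x_{n+1} = Q(x0, x_n, T_n x_n) from x0.
   [N = None]: the iteration never terminates; [N = Some m]: it terminates at
   step m, i.e. steps 0..m-1 are performed and H(x0,x_m) ∩ H(x_m,T_m x_m) = ∅.
   Values of x beyond the termination step are irrelevant. *)
Definition Q_run (T : nat -> X -> X) (x0 : X) (x : nat -> X) (N : option nat) : Prop :=
  x 0%nat = x0 /\
  (forall n, (forall m, N = Some m -> (n < m)%nat) ->
      is_Q x0 (x n) (T n (x n)) (x (S n))) /\
  (forall m, N = Some m ->
      ~ exists w, Hs x0 (x m) w /\ Hs (x m) (T m (x m)) w).

End Defs.

(* Everything rests on the coherence hypothesis: a sequence (x_n) which is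
   bounded and has summable ‖x_{n+1}-x_n‖² and ‖x_n - T_n x_n‖² has all its
   weak cluster points in F.
   (i)  The relaxed iteration x_{n+1} = x_n + (2-ε)(T_n x_n - x_n) is Fejér
        monotone w.r.t. F ([relaxed_step_fejer]): it is bounded, the two series
        are telescoping, and ‖x_n - z‖ converges for z ∈ F.  Opial's lemma
        ([opial]) turns this into weak convergence to a point of F.
   (ii) For x_{n+1} = Q(x_0,x_n,T_n x_n), induction gives F ⊂ H(x_0,x_n), so the
        run never terminates when F ≠ ∅; ‖x_n - x_0‖ is nondecreasing and
        bounded by ‖P_F x_0 - x_0‖, weak cluster points are forced to equal
        P_F x_0, and a Kadec–Klee argument ([strong_cv_of_weak_cv]) gives strong
        convergence.  When F = ∅ a bounded run would have a cluster point in F. *)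
From Stdlib Require Import Reals Lra Lia Psatz Classical ClassicalEpsilon ZArith.
Open Scope R_scope.

Arguments hadd_assoc {h}. Arguments hadd_comm {h}. Arguments hadd_zero {h}.
Arguments hadd_opp {h}. Arguments hinner_sym {h}. Arguments hinner_add {h}.
Arguments hinner_scal {h}. Arguments hinner_pos {h}. Arguments hinner_def {h}.
Arguments hcomplete {h}.

Section InnerAlgebra.
Context {X : Hilbert}.
Implicit Types x y z w : X.

Lemma inner_zero_l y : hinner (@hzero X) y = 0.
Proof. pose proof (hinner_add hzero hzero y) as H. rewrite hadd_zero in H. lra. Qed.

Lemma inner_opp_l x y : hinner (hopp x) y = - hinner x y.
Proof.
  pose proof (hinner_add x (hopp x) y) as H. rewrite hadd_opp, inner_zero_l in H. lra.
Qed.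

Lemma inner_add_r x y z : hinner x (hadd y z) = hinner x y + hinner x z.
Proof. rewrite !(hinner_sym x). apply hinner_add. Qed.

Lemma inner_scal_r a x y : hinner x (hscal a y) = a * hinner x y.
Proof. rewrite !(hinner_sym x). apply hinner_scal. Qed.

Lemma inner_opp_r x y : hinner x (hopp y) = - hinner x y.
Proof. rewrite !(hinner_sym x). apply inner_opp_l. Qed.

Lemma inner_zero_r y : hinner y (@hzero X) = 0.
Proof. rewrite hinner_sym. apply inner_zero_l. Qed.

Lemma vec_ext x y : (forall w, hinner x w = hinner y w) -> x = y.
Proof.
  intro H. assert (E : hadd x (hopp y) = hzero).
  { apply hinner_def. rewrite hinner_add, inner_opp_l, H. lra. }
  rewrite <- (hadd_zero x), <- (hadd_opp y), (hadd_comm y), hadd_assoc, E.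
  rewrite (hadd_comm hzero), hadd_zero. reflexivity.
Qed.

Lemma hsub_self x : hsub x x = hzero.
Proof. apply hadd_opp. Qed.
End InnerAlgebra.

Ltac inner_expand := unfold hsub in *; repeat (rewrite ?hinner_add, ?hinner_scal,
  ?inner_opp_l, ?inner_zero_l, ?inner_add_r, ?inner_scal_r, ?inner_opp_r, ?inner_zero_r).
Ltac inner_expand_in H := unfold hsub in H; repeat (rewrite ?hinner_add, ?hinner_scal,
  ?inner_opp_l, ?inner_zero_l, ?inner_add_r, ?inner_scal_r, ?inner_opp_r, ?inner_zero_r in H).
Ltac vec_eq := apply vec_ext; intro; inner_expand; ring.

Section Norm.
Context {X : Hilbert}.
Implicit Types x y z : X.

Lemma hnorm_pos x : 0 <= hnorm x.
Proof. apply sqrt_pos. Qed.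

Lemma hnorm_sq x : hnorm x * hnorm x = hinner x x.
Proof. unfold hnorm. apply sqrt_sqrt, hinner_pos. Qed.

Lemma hnorm_pow2 x : hnorm x ^ 2 = hinner x x.
Proof. rewrite <- hnorm_sq. ring. Qed.

Lemma hnorm_le x y : hinner x x <= hinner y y -> hnorm x <= hnorm y.
Proof. intro; unfold hnorm; apply sqrt_le_1_alt; auto. Qed.

Lemma hnorm_le_inv x y : hnorm x <= hnorm y -> hinner x x <= hinner y y.
Proof. intro H. rewrite <- !hnorm_sq. pose proof (hnorm_pos x). nra. Qed.

Lemma hnorm_le_c x c : 0 <= c -> hinner x x <= c * c -> hnorm x <= c.
Proof.
  intros Hc H. destruct (Rle_or_lt (hnorm x) c); auto.
  rewrite <- hnorm_sq in H. pose proof (hnorm_pos x). nra.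
Qed.

Lemma hnorm_lt_c x c : 0 <= c -> hinner x x < c * c -> hnorm x < c.
Proof.
  intros Hc H. destruct (Rlt_or_le (hnorm x) c); auto.
  rewrite <- hnorm_sq in H. pose proof (hnorm_pos x). nra.
Qed.

Lemma sqnorm_sub_sym x y : hinner (hsub x y) (hsub x y) = hinner (hsub y x) (hsub y x).
Proof. inner_expand. ring. Qed.

Lemma hnorm_sub_sym x y : hnorm (hsub x y) = hnorm (hsub y x).
Proof. unfold hnorm. rewrite sqnorm_sub_sym. reflexivity. Qed.

(* Cauchy–Schwarz, from 0 <= ‖x - (⟨x,y⟩/‖y‖²) y‖². *)
Lemma cauchy_schwarz_sq x y : hinner x y * hinner x y <= hinner x x * hinner y y.
Proof.
  destruct (Req_dec (hinner y y) 0) as [E|E].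
  - apply hinner_def in E. subst. rewrite !inner_zero_r. lra.
  - pose proof (hinner_pos y). assert (Hc : 0 < hinner y y) by lra.
    pose proof (hinner_pos (hadd x (hscal (- (hinner x y / hinner y y)) y))) as P.
    inner_expand_in P. rewrite (hinner_sym y x) in P.
    set (a := hinner x x) in *. set (b := hinner x y) in *. set (c := hinner y y) in *.
    assert (P' : 0 <= a - b * b / c).
    { eapply Rle_trans; [exact P|]; right; field; lra. }
    apply (Rmult_le_compat_r c) in P'; [|lra].
    replace ((a - b * b / c) * c) with (a * c - b * b) in P' by (field; lra). lra.
Qed.

Lemma cauchy_schwarz x y : Rabs (hinner x y) <= hnorm x * hnorm y.
Proof.
  pose proof (cauchy_schwarz_sq x y). pose proof (hnorm_pos x). pose proof (hnorm_pos y).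
  rewrite <- !hnorm_sq in H. pose proof (Rmult_le_pos _ _ H0 H1).
  apply Rabs_le; split; nra.
Qed.

Lemma inner_le_norms x y : hinner x y <= hnorm x * hnorm y.
Proof. pose proof (cauchy_schwarz x y). pose proof (Rle_abs (hinner x y)). lra. Qed.

Lemma inner_ge_norms x y : - (hnorm x * hnorm y) <= hinner x y.
Proof.
  pose proof (cauchy_schwarz x y). pose proof (Rle_abs (- hinner x y)).
  rewrite Rabs_Ropp in H0. lra.
Qed.

Lemma hnorm_tri x y : hnorm (hadd x y) <= hnorm x + hnorm y.
Proof.
  apply hnorm_le_c. { pose proof (hnorm_pos x); pose proof (hnorm_pos y); lra. }
  inner_expand. rewrite (hinner_sym y x). pose proof (inner_le_norms x y).
  rewrite <- (hnorm_sq x), <- (hnorm_sq y). nra.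
Qed.

Lemma hnorm_opp x : hnorm (hopp x) = hnorm x.
Proof. unfold hnorm. inner_expand. f_equal. ring. Qed.

Lemma hnorm_sub_tri x y z : hnorm (hsub x z) <= hnorm (hsub x y) + hnorm (hsub y z).
Proof. replace (hsub x z) with (hadd (hsub x y) (hsub y z)) by vec_eq. apply hnorm_tri. Qed.

Lemma hnorm_le_sub x c : hnorm x <= hnorm (hsub x c) + hnorm c.
Proof. replace x with (hadd (hsub x c) c) at 1 by vec_eq. apply hnorm_tri. Qed.

Lemma strong_cv_iff (u : nat -> X) l : strong_cv u l <->
  forall eps, eps > 0 -> exists N, forall n, (n >= N)%nat -> hnorm (hsub (u n) l) < eps.
Proof.
  unfold strong_cv, Un_cv, Rdist. split; intros H eps He; destruct (H eps He) as [N HN];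
  exists N; intros n Hn; specialize (HN n Hn).
  - rewrite Rminus_0_r, Rabs_pos_eq in HN by apply hnorm_pos. auto.
  - rewrite Rminus_0_r, Rabs_pos_eq by apply hnorm_pos. auto.
Qed.

Lemma complete_seq (u : nat -> X) :
  (forall eps, eps > 0 -> exists N, forall m n, (m >= N)%nat -> (n >= N)%nat ->
        hnorm (hsub (u m) (u n)) < eps) -> exists l, strong_cv u l.
Proof.
  intro H. destruct (hcomplete u H) as [l Hl]. exists l. apply strong_cv_iff. exact Hl.
Qed.
End Norm.

Definition sincr (phi : nat -> nat) : Prop := forall n, (phi n < phi (S n))%nat.

Lemma sincr_ge phi : sincr phi -> forall n, (n <= phi n)%nat.
Proof. intros H n; induction n; [lia|]. specialize (H n); lia. Qed.

Lemma sincr_mono phi : sincr phi -> forall n m, (n <= m)%nat -> (phi n <= phi m)%nat.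
Proof. intros H n m Hnm; induction Hnm; [lia|]. specialize (H m); lia. Qed.

Lemma sincr_strict phi : sincr phi -> forall n m, (n < m)%nat -> (phi n < phi m)%nat.
Proof. intros H n m Hnm. pose proof (sincr_mono _ H (S n) m Hnm). specialize (H n). lia. Qed.

Lemma sincr_comp phi psi : sincr phi -> sincr psi -> sincr (fun n => phi (psi n)).
Proof. intros H1 H2 n. apply sincr_strict; auto. Qed.

Lemma extract_sub (P : nat -> Prop) : (forall N, exists n, (N <= n)%nat /\ P n) ->
  exists psi, sincr psi /\ forall n, P (psi n).
Proof.
  intro H.
  pose (pick := fun N => proj1_sig (constructive_indefinite_description _ (H N))).
  assert (Hp : forall N, (N <= pick N)%nat /\ P (pick N)).
  { intro N. unfold pick. destruct (constructive_indefinite_description _ _). auto. }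
  pose (psi := fix psi n := match n with O => pick O | S m => pick (S (psi m)) end).
  exists psi. split.
  - intro n. simpl. destruct (Hp (S (psi n))). lia.
  - intros [|n]; apply Hp.
Qed.

Lemma not_eventually (P : nat -> Prop) :
  ~ (exists N, forall n, (n >= N)%nat -> ~ P n) -> forall N, exists n, (N <= n)%nat /\ P n.
Proof.
  intros H N. apply NNPP. intro Hn. apply H. exists N. intros n Hn0 Pn. apply Hn. eauto.
Qed.

Lemma least_ex (P : nat -> Prop) :
  (exists m, P m) -> exists m, P m /\ forall k, (k < m)%nat -> ~ P k.
Proof.
  intros [m Hm]. apply NNPP. intro Hno.
  assert (H : forall n k, (k <= n)%nat -> ~ P k).
  { induction n; intros k Hk Pk; apply Hno.
    - exists k. split; auto. intros; lia.
    - destruct (Nat.eq_dec k (S n)) as [->|]; [|exfalso; apply (IHn k); auto; lia].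
      exists (S n). split; auto. intros k' Hk'. apply IHn. lia. }
  apply (H m m); auto.
Qed.

Lemma inv_small eps : eps > 0 -> exists N : nat, / (INR N + 1) < eps.
Proof.
  intro H. destruct (archimed (/ eps)) as [H1 _].
  assert (0 <= up (/eps))%Z. { apply le_IZR. pose proof (Rinv_0_lt_compat eps H). lra. }
  exists (Z.to_nat (up (/eps))). rewrite INR_IZR_INZ, Z2Nat.id by auto.
  pose proof (Rinv_0_lt_compat eps H).
  apply Rlt_le_trans with (r2 := / / eps); [apply Rinv_lt_contravar; nra | rewrite Rinv_inv; lra].
Qed.

Lemma inv_succ_le (N n : nat) : (N <= n)%nat -> / (INR n + 1) <= / (INR N + 1).
Proof.
  intro H. apply Rinv_le_contravar. pose proof (pos_INR N); lra. apply le_INR in H; lra.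
Qed.

Lemma Un_cv_const c : Un_cv (fun _ => c) c.
Proof. intros eps He. exists O. intros. unfold Rdist. rewrite Rminus_diag, Rabs_R0. auto. Qed.

Lemma Un_cv_le u l M : Un_cv u l -> (forall n, u n <= M) -> l <= M.
Proof.
  intros H HM. destruct (Rle_or_lt l M); auto.
  destruct (H (l - M)) as [N HN]; [lra|]. specialize (HN N (le_n _)). specialize (HM N).
  unfold Rdist in HN. apply Rabs_def2 in HN. lra.
Qed.

Lemma Un_cv_ge u l M : Un_cv u l -> (forall n, M <= u n) -> M <= l.
Proof.
  intros H HM. destruct (Rle_or_lt M l); auto.
  destruct (H (M - l)) as [N HN]; [lra|]. specialize (HN N (le_n _)). specialize (HM N).
  unfold Rdist in HN. apply Rabs_def2 in HN. lra.
Qed.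

Lemma Un_cv_subseq u l phi : Un_cv u l -> sincr phi -> Un_cv (fun n => u (phi n)) l.
Proof.
  intros H Hp eps He. destruct (H eps He) as [N HN]. exists N. intros n Hn.
  apply HN. pose proof (sincr_ge _ Hp n). lia.
Qed.

Lemma mono_le (u : nat -> R) n m : (forall n, u n <= u (S n)) -> (n <= m)%nat -> u n <= u m.
Proof. intros H Hnm; induction Hnm; [lra|]. specialize (H m); lra. Qed.

Lemma anti_le (u : nat -> R) n m : (forall n, u (S n) <= u n) -> (n <= m)%nat -> u m <= u n.
Proof. intros H Hnm; induction Hnm; [lra|]. specialize (H m); lra. Qed.

Lemma anti_cv (u : nat -> R) : (forall n, u (S n) <= u n) -> (forall n, 0 <= u n) ->
  exists l, Un_cv u l.
Proof.
  intros H1 H2. destruct (decreasing_cv u) as [l Hl]. intro n; apply H1.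
  exists 0. intros r [i ->]. unfold opp_seq. specialize (H2 i). lra. eauto.
Qed.

Lemma telescope_summable (a b : nat -> R) c : 0 < c -> (forall n, 0 <= a n) ->
  (forall n, 0 <= b n) -> (forall n, c * a n <= b n - b (S n)) -> summable a.
Proof.
  intros Hc Ha Hb H.
  assert (Hsum : forall n, c * sum_f_R0 a n <= b 0%nat - b (S n)).
  { induction n; simpl. apply H. specialize (H (S n)). lra. }
  destruct (growing_cv (sum_f_R0 a)) as [l Hl].
  - intro n. simpl. specialize (Ha (S n)). lra.
  - exists (b 0%nat / c). intros r [n ->]. specialize (Hsum n). specialize (Hb (S n)).
    apply (Rmult_le_reg_l c); auto. field_simplify; lra.
  - exists l. exact Hl.
Qed.

Lemma Rabs_le_inv a b : Rabs a <= b -> - b <= a <= b.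
Proof.
  intro H. pose proof (Rle_abs a). pose proof (Rle_abs (-a)). rewrite Rabs_Ropp in H1. lra.
Qed.

Lemma bolzano_weierstrass (u : nat -> R) M : (forall n, Rabs (u n) <= M) ->
  exists phi l, sincr phi /\ Un_cv (fun n => u (phi n)) l.
Proof.
  intro HM.
  destruct (Bolzano_Weierstrass u (fun c => -M <= c <= M) (compact_P3 _ _)) as [l Hl].
  { intro n. apply Rabs_le_inv, HM. }
  assert (Hnear : forall k N : nat, exists p, (N <= p)%nat /\ Rabs (u p - l) < / (INR k + 1)).
  { intros k N. assert (Hd : 0 < / (INR k + 1)).
    { apply Rinv_0_lt_compat. pose proof (pos_INR k); lra. }
    destruct (Hl (disc l (mkposreal _ Hd)) N) as [p [Hp1 Hp2]].
    - exists (mkposreal _ Hd). intros y Hy; exact Hy.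
    - exists p. split; auto. }
  (* pick the k-th index beyond the previous one, within 1/(k+1) of l *)
  pose (pick := fun N k => proj1_sig (constructive_indefinite_description _ (Hnear k N))).
  assert (Hpick : forall N k, (N <= pick N k)%nat /\ Rabs (u (pick N k) - l) < / (INR k + 1)).
  { intros N k. unfold pick. destruct (constructive_indefinite_description _ _). auto. }
  pose (phi := fix phi n := match n with O => pick O O | S m => pick (S (phi m)) (S m) end).
  exists phi, l. split.
  - intro n. simpl. destruct (Hpick (S (phi n)) (S n)). lia.
  - assert (Hc : forall n, Rabs (u (phi n) - l) < / (INR n + 1)) by (intros [|n]; apply Hpick).
    intros eps He. destruct (inv_small eps He) as [N HN]. exists N. intros n Hn.
    unfold Rdist. pose proof (Hc n). pose proof (inv_succ_le N n Hn). lra.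
Qed.

Lemma diagonal (a : nat -> nat -> R) B : (forall k n, Rabs (a k n) <= B) ->
  exists phi, sincr phi /\ forall k, exists l, Un_cv (fun n => a k (phi n)) l.
Proof.
  intro HB.
  assert (Hext : forall (psi : nat -> nat) (k : nat), exists sg, sincr sg /\
     exists l, Un_cv (fun n => a k (psi (sg n))) l).
  { intros psi k. destruct (bolzano_weierstrass (fun n => a k (psi n)) B) as [sg [l [H1 H2]]];
    eauto. }
  pose (ext := fun psi k => proj1_sig (constructive_indefinite_description _ (Hext psi k))).
  assert (Hx : forall psi k, sincr (ext psi k) /\
                 exists l, Un_cv (fun n => a k (psi (ext psi k n))) l).
  { intros psi k. unfold ext. destruct (constructive_indefinite_description _ _). auto. }
  (* Psi k: nested subsequences, the k-th one making a 0, ..., a k converge *)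
  pose (Psi := fix Psi k := match k with
     | O => fun n => ext (fun i => i) O n
     | S k' => fun n => Psi k' (ext (Psi k') (S k') n) end).
  assert (HPs : forall k, sincr (Psi k)).
  { induction k; simpl. apply (Hx (fun i => i) O). apply sincr_comp; auto. apply Hx. }
  assert (HPc : forall k, exists l, Un_cv (fun n => a k (Psi k n)) l).
  { intros [|k]; simpl. apply (Hx (fun i => i) O). apply Hx. }
  assert (HPg : forall m n, (m <= n)%nat -> exists g, (forall i, (i <= g i)%nat) /\
      forall i, Psi n i = Psi m (g i)).
  { intros m n Hmn. induction Hmn.
    - exists (fun i => i). split; auto.
    - destruct IHHmn as [g [Hg1 Hg2]]. exists (fun i => g (ext (Psi m0) (S m0) i)). split.
      + intro i. specialize (Hg1 (ext (Psi m0) (S m0) i)).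
        pose proof (sincr_ge _ (proj1 (Hx (Psi m0) (S m0))) i). lia.
      + intro i. simpl. apply Hg2. }
  exists (fun n => Psi n n). split.
  - intro n. simpl. apply sincr_strict; auto.
    pose proof (sincr_ge _ (proj1 (Hx (Psi n) (S n))) (S n)). lia.
  - intro k. destruct (HPc k) as [l Hl]. exists l. intros eps He.
    destruct (Hl eps He) as [N HN]. exists (max N k). intros n Hn.
    destruct (HPg k n ltac:(lia)) as [g [Hg1 Hg2]]. rewrite Hg2. apply HN.
    specialize (Hg1 n). lia.
Qed.

Section Projection.
Context {X : Hilbert}.
Implicit Types x p q : X.

(* p = P_C x satisfies ⟨q - p, x - p⟩ ≤ 0 for all q ∈ C, i.e. C ⊂ H(x, p). *)
Lemma proj_var C x p q : hconvex_set C -> is_proj C x p -> C q ->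
  hinner (hsub q p) (hsub x p) <= 0.
Proof.
  intros Hv [Hp Hmin] Hq.
  destruct (Rle_or_lt (hinner (hsub q p) (hsub x p)) 0) as [|Ha]; auto. exfalso.
  set (a := hinner (hsub q p) (hsub x p)) in *.
  set (b := hinner (hsub q p) (hsub q p)).
  assert (Hb : 0 < b).
  { destruct (hinner_pos (hsub q p)) as [|E]; auto. symmetry in E; apply hinner_def in E.
    unfold a in Ha; rewrite E, inner_zero_l in Ha. lra. }
  (* moving from p towards q by t = min 1 (a/b) strictly decreases the distance to x *)
  set (t := Rmin 1 (a / b)).
  assert (Ht : 0 < t <= 1).
  { unfold t. split. apply Rmin_glb_lt. lra. apply Rdiv_lt_0_compat; lra. apply Rmin_l. }
  assert (Htb : t * b <= a).
  { assert (t <= a / b) by apply Rmin_r. apply (Rmult_le_compat_r b) in H; [|lra].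
    unfold Rdiv in H. rewrite Rmult_assoc, Rinv_l in H by lra. lra. }
  specialize (Hmin _ (Hv p q t Hp Hq (conj (Rlt_le _ _ (proj1 Ht)) (proj2 Ht)))).
  apply hnorm_le_inv in Hmin.
  assert (E : hinner (hsub x (hadd (hscal (1 - t) p) (hscal t q)))
                     (hsub x (hadd (hscal (1 - t) p) (hscal t q)))
     = hinner (hsub x p) (hsub x p) - 2 * t * a + t * t * b).
  { unfold a, b. inner_expand. rewrite (hinner_sym q x), (hinner_sym p x), (hinner_sym p q).
    ring. }
  rewrite E in Hmin. nra.
Qed.

Lemma proj_unique C x p1 p2 : hconvex_set C -> is_proj C x p1 -> is_proj C x p2 -> p1 = p2.
Proof.
  intros Hv H1 H2. pose proof (proj_var _ _ _ _ Hv H1 (proj1 H2)) as V1.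
  pose proof (proj_var _ _ _ _ Hv H2 (proj1 H1)) as V2.
  assert (E : hinner (hsub p1 p2) (hsub p1 p2) = 0).
  { pose proof (hinner_pos (hsub p1 p2)) as P.
    inner_expand_in P. inner_expand_in V1. inner_expand_in V2. inner_expand.
    rewrite (hinner_sym p2 x), (hinner_sym p1 x), (hinner_sym p2 p1) in *. lra. }
  apply hinner_def in E. apply vec_ext. intro w.
  assert (Ew : hinner (hsub p1 p2) w = 0) by (rewrite E; apply inner_zero_l).
  inner_expand_in Ew. lra.
Qed.

Lemma minimizing_seq C x : (exists c, C c) -> exists d (cs : nat -> X),
  (forall c, C c -> d <= hinner (hsub x c) (hsub x c)) /\
  forall n, C (cs n) /\ hinner (hsub x (cs n)) (hsub x (cs n)) < d + / (INR n + 1).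
Proof.
  intros [c0 Hc0].
  set (E := fun r => exists c, C c /\ r = - hinner (hsub x c) (hsub x c)).
  assert (HE : bound E).
  { exists 0. intros r [c [_ ->]]. pose proof (hinner_pos (hsub x c)). lra. }
  destruct (completeness E HE (ex_intro _ _ (ex_intro _ c0 (conj Hc0 eq_refl))))
    as [m [Hm1 Hm2]].
  assert (Hd : forall c, C c -> - m <= hinner (hsub x c) (hsub x c)).
  { intros c Hcc. assert (Ec : E (- hinner (hsub x c) (hsub x c))) by (exists c; auto).
    apply Hm1 in Ec. lra. }
  assert (Hex : forall n : nat,
             exists c, C c /\ hinner (hsub x c) (hsub x c) < - m + / (INR n + 1)).
  { intro n. apply NNPP. intro Hn.
    assert (Hpos : 0 < / (INR n + 1)). { apply Rinv_0_lt_compat. pose proof (pos_INR n); lra. }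
    assert (Hub : is_upper_bound E (m - / (INR n + 1))).
    { intros r [c [Hcc ->]]. apply Rnot_lt_le. intro Hlt. apply Hn. exists c. split; auto. lra. }
    apply Hm2 in Hub. lra. }
  exists (- m), (fun n => proj1_sig (constructive_indefinite_description _ (Hex n))).
  split; auto. intro n. destruct (constructive_indefinite_description _ _). auto.
Qed.

(* Parallelogram law: a minimizing sequence in a convex set is Cauchy. *)
Lemma minimizing_seq_cauchy C x d (cs : nat -> X) : hconvex_set C ->
  (forall c, C c -> d <= hinner (hsub x c) (hsub x c)) ->
  (forall n, C (cs n) /\ hinner (hsub x (cs n)) (hsub x (cs n)) < d + / (INR n + 1)) ->
  forall n k, hinner (hsub (cs n) (cs k)) (hsub (cs n) (cs k))
              <= 2 * / (INR n + 1) + 2 * / (INR k + 1).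
Proof.
  intros Hv Hd Hcs n k. destruct (Hcs n) as [Cn Dn]. destruct (Hcs k) as [Ck Dk].
  set (mid := hadd (hscal (1 - /2) (cs n)) (hscal (/2) (cs k))).
  assert (Cm : C mid) by (apply Hv; auto; lra).
  apply Hd in Cm.
  assert (Eq : hinner (hsub (cs n) (cs k)) (hsub (cs n) (cs k)) =
    2 * hinner (hsub x (cs n)) (hsub x (cs n)) + 2 * hinner (hsub x (cs k)) (hsub x (cs k))
    - 4 * hinner (hsub x mid) (hsub x mid)).
  { unfold mid. inner_expand.
    rewrite (hinner_sym (cs k) (cs n)), (hinner_sym (cs n) x), (hinner_sym (cs k) x). field. }
  rewrite Eq. lra.
Qed.

(* Every nonempty closed convex set admits a metric projection: the limit of
   a minimizing sequence is a minimizer. *)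
Lemma proj_exists C x : hclosed_set C -> hconvex_set C -> (exists c, C c) ->
  exists p, is_proj C x p.
Proof.
  intros Hc Hv HC. destruct (minimizing_seq C x HC) as [d [cs [Hd Hcs]]].
  pose proof (minimizing_seq_cauchy C x d cs Hv Hd Hcs) as Hpar.
  destruct (complete_seq cs) as [p Hp].
  { intros eps He. destruct (inv_small (eps * eps / 4)) as [N HN].
    { apply Rdiv_lt_0_compat; nra. }
    exists N. intros m0 n0 Hm Hn. apply hnorm_lt_c; [lra|].
    pose proof (Hpar m0 n0). pose proof (inv_succ_le N m0 Hm). pose proof (inv_succ_le N n0 Hn).
    lra. }
  assert (HpC : C p) by (apply (Hc cs p); auto; intro n; apply Hcs).
  exists p. split; auto. intros q Hq.
  (* otherwise some cs n, close to p, would be closer to x than q *)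
  apply Rnot_lt_le. intro Hlt.
  set (s := hnorm (hsub x q)) in *. set (g := hnorm (hsub x p) - s).
  assert (Hs : d <= s * s) by (unfold s; rewrite hnorm_sq; auto).
  assert (Hs0 : 0 <= s) by apply hnorm_pos.
  assert (Hg : 0 < g) by (unfold g; lra).
  rewrite strong_cv_iff in Hp. destruct (Hp (g / 2)) as [N1 HN1]; [lra|].
  destruct (inv_small (g * g / 4)) as [N2 HN2]; [apply Rdiv_lt_0_compat; nra|].
  set (n := max N1 N2).
  assert (H1 : hnorm (hsub (cs n) p) < g / 2) by (apply HN1; unfold n; lia).
  assert (H2 : hnorm (hsub x (cs n)) < s + g / 2).
  { apply hnorm_lt_c; [lra|]. destruct (Hcs n) as [_ Hn].
    pose proof (inv_succ_le N2 n ltac:(unfold n; lia)). nra. }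
  pose proof (hnorm_sub_tri x (cs n) p). unfold g in *. lra.
Qed.
End Projection.

Section WeakCompactness.
Context {X : Hilbert}.
Implicit Types x y w p : X.

Definition subspace (S : X -> Prop) : Prop :=
  S hzero /\ (forall a b, S a -> S b -> S (hadd a b)) /\ (forall t a, S a -> S (hscal t a)).

Lemma subspace_convex S : subspace S -> hconvex_set S.
Proof. intros [H0 [H1 H2]] a b t Ha Hb _. auto. Qed.

Lemma subspace_orth S x p : subspace S -> is_proj S x p ->
  forall k, S k -> hinner k (hsub x p) = 0.
Proof.
  intros HS Hp k Hk. destruct HS as [H0 [H1 H2]] eqn:HSe.
  pose proof (proj_var S x p (hadd p k) (subspace_convex S HS) Hp (H1 _ _ (proj1 Hp) Hk)) as A1.
  pose proof (proj_var S x p (hadd p (hscal (-1) k)) (subspace_convex S HS) Hp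
     (H1 _ _ (proj1 Hp) (H2 (-1) _ Hk))) as A2.
  inner_expand_in A1. inner_expand_in A2. inner_expand. lra.
Qed.

Lemma kernel_closed (f : X -> R) M :
  (forall a b, f (hsub a b) = f a - f b) -> (forall w, Rabs (f w) <= M * hnorm w) ->
  hclosed_set (fun w => f w = 0).
Proof.
  intros fsub fbd s l Hs Hl. destruct (Req_dec (f l) 0) as [|Hne]; auto. exfalso.
  assert (Hpos : 0 < Rabs (f l)) by (apply Rabs_pos_lt; auto).
  assert (HM : 0 <= M) by (pose proof (fbd l); pose proof (hnorm_pos l); nra).
  destruct (proj1 (strong_cv_iff _ _) Hl (Rabs (f l) / (M + 1))) as [N HN].
  { apply Rdiv_lt_0_compat; lra. }
  (* |f l| = |f (s_N - l)| <= M ‖s_N - l‖ < |f l| *)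
  specialize (HN N (le_n _)). pose proof (fbd (hsub (s N) l)) as B.
  rewrite fsub, (Hs N), Rminus_0_l, Rabs_Ropp in B.
  assert (M * hnorm (hsub (s N) l) <= M * (Rabs (f l) / (M + 1)))
    by (apply Rmult_le_compat_l; lra).
  assert (Rabs (f l) / (M + 1) * (M + 1) = Rabs (f l)) by (field; lra).
  nra.
Qed.

(* Riesz representation of a bounded linear functional: if f ≠ 0, the residual
   e = v0 - P_K v0 of any v0 ∉ K = ker f is orthogonal to K, and f is a
   multiple of ⟨e, ·⟩. *)
Lemma riesz_representation (f : X -> R) M :
  (forall a b, f (hadd a b) = f a + f b) -> (forall t a, f (hscal t a) = t * f a) ->
  (forall w, Rabs (f w) <= M * hnorm w) -> exists y, forall w, f w = hinner y w.
Proof.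
  intros fadd fscal fbd.
  assert (fzero : f hzero = 0).
  { replace (@hzero X) with (hscal 0 (@hzero X)) by vec_eq. rewrite fscal. ring. }
  assert (fsub : forall a b, f (hsub a b) = f a - f b).
  { intros a b. replace (hsub a b) with (hadd a (hscal (-1) b)) by vec_eq.
    rewrite fadd, fscal. ring. }
  destruct (classic (exists v0, f v0 <> 0)) as [[v0 Hv0]|Hall].
  2:{ exists hzero. intro w. rewrite inner_zero_l. apply NNPP. intro; apply Hall; eauto. }
  set (K := fun w => f w = 0).
  assert (KS : subspace K).
  { unfold K; split; [|split]; intros. auto. rewrite fadd, H, H0; ring. rewrite fscal, H; ring. }
  destruct (proj_exists K v0 (kernel_closed f M fsub fbd) (subspace_convex K KS)
              (ex_intro _ hzero fzero)) as [p Hp].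
  set (e := hsub v0 p).
  assert (Hfe : f e = f v0) by (unfold e; rewrite fsub, (proj1 Hp); ring).
  assert (Horth := subspace_orth K v0 p KS Hp). fold e in Horth.
  assert (Hc : hinner e e <> 0).
  { intro E0. apply hinner_def in E0. rewrite E0, fzero in Hfe. auto. }
  exists (hscal (f e / hinner e e) e). intro w.
  assert (Kw : K (hsub w (hscal (f w / f e) e))).
  { unfold K. rewrite fsub, fscal. field. rewrite Hfe; auto. }
  apply Horth in Kw. inner_expand_in Kw. inner_expand. rewrite (hinner_sym e w).
  assert (E : hinner w e = f w / f e * hinner e e) by lra. rewrite E. field.
  rewrite Hfe; auto.
Qed.

(* A pointwise limit of ⟨u_n, ·⟩ for a bounded (u_n) is a bounded linear
   functional, hence of the form ⟨y, ·⟩: y is then the weak limit. *)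
Lemma weak_limit_represented (u : nat -> X) M f : (forall n, hnorm (u n) <= M) ->
  (forall w, Un_cv (fun n => hinner (u n) w) (f w)) -> exists y, weak_cv u y.
Proof.
  intros HM Hf.
  assert (Hlin : forall a b s t,
             f (hadd (hscal s a) (hscal t b)) = s * f a + t * f b).
  { intros a b s t. apply (UL_sequence (fun n => hinner (u n) (hadd (hscal s a) (hscal t b))));
      auto.
    apply (Un_cv_ext (fun n => s * hinner (u n) a + t * hinner (u n) b)).
    { intro; inner_expand; ring. }
    apply CV_plus; apply CV_mult; auto; apply Un_cv_const. }
  destruct (riesz_representation f M) as [y Hy].
  - intros a b. rewrite <- (hscal_one _ a), <- (hscal_one _ b), Hlin, !hscal_one. ring.
  - intros t a. replace (hscal t a) with (hadd (hscal t a) (hscal 0 a)) by vec_eq.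
    rewrite Hlin. ring.
  - intro w. apply Rabs_le. pose proof (hnorm_pos w).
    assert (Hb : forall n, - (M * hnorm w) <= hinner (u n) w <= M * hnorm w).
    { intro n. apply Rabs_le_inv. eapply Rle_trans. apply cauchy_schwarz.
      apply Rmult_le_compat_r; auto. }
    split; [apply (Un_cv_ge _ _ _ (Hf w)) | apply (Un_cv_le _ _ _ (Hf w))];
      intro n; apply Hb.
  - exists y. intro w. rewrite <- Hy. apply Hf.
Qed.

Definition conv_dirs (u : nat -> X) (w : X) : Prop :=
  exists l, Un_cv (fun n => hinner (u n) w) l.

Lemma conv_dirs_subspace (u : nat -> X) : subspace (conv_dirs u).
Proof.
  split; [|split].
  - exists 0. apply (Un_cv_ext (fun n => 0)). intro; inner_expand; auto. apply Un_cv_const.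
  - intros a b [la Ha] [lb Hb]. exists (la + lb).
    apply (Un_cv_ext (fun n => hinner (u n) a + hinner (u n) b)). intro; inner_expand; auto.
    apply CV_plus; auto.
  - intros t a [la Ha]. exists (t * la).
    apply (Un_cv_ext (fun n => t * hinner (u n) a)). intro; inner_expand; auto.
    apply CV_mult; auto. apply Un_cv_const.
Qed.

(* For bounded (u_n) the sequences ⟨u_n, w⟩ are uniformly Cauchy-controlled in
   w, so [conv_dirs u] is closed. *)
Lemma conv_dirs_closed (u : nat -> X) M : (forall n, hnorm (u n) <= M) ->
  hclosed_set (conv_dirs u).
Proof.
  intros HM s l Hs Hl. pose proof (proj1 (strong_cv_iff _ _) Hl) as Hl'.
  assert (M0 : 0 <= M) by (pose proof (hnorm_pos (u O)); specialize (HM O); lra).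
  enough (Hc : Cauchy_crit (fun n => hinner (u n) l))
    by (destruct (R_complete _ Hc) as [ll Hll]; exists ll; exact Hll).
  intros eps He. destruct (Hl' (eps / (4 * (M + 1)))) as [j Hj].
  { apply Rdiv_lt_0_compat; lra. }
  specialize (Hj j (le_n _)). destruct (Hs j) as [lj Hlj].
  destruct (CV_Cauchy _ (exist _ lj Hlj) (eps / 2)) as [N HN]; [lra|].
  exists N. intros n m Hn Hm. specialize (HN n m Hn Hm). unfold Rdist in *.
  assert (E1 : hinner (u n) l - hinner (u m) l =
    (hinner (u n) (s j) - hinner (u m) (s j)) - hinner (u n) (hsub (s j) l)
    + hinner (u m) (hsub (s j) l)) by (inner_expand; ring).
  rewrite E1.
  pose proof (cauchy_schwarz (u n) (hsub (s j) l)).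
  pose proof (cauchy_schwarz (u m) (hsub (s j) l)).
  pose proof (hnorm_pos (hsub (s j) l)).
  assert (hnorm (u n) * hnorm (hsub (s j) l) <= M * (eps / (4 * (M + 1))))
    by (apply Rmult_le_compat; auto using hnorm_pos; lra).
  assert (hnorm (u m) * hnorm (hsub (s j) l) <= M * (eps / (4 * (M + 1))))
    by (apply Rmult_le_compat; auto using hnorm_pos; lra).
  assert (M * (eps / (4 * (M + 1))) <= eps / 4).
  { apply (Rmult_le_reg_r (4 * (M + 1))). lra. field_simplify; nra. }
  eapply Rle_lt_trans. apply Rabs_triang. eapply Rle_lt_trans.
  apply Rplus_le_compat_r. apply Rabs_triang. rewrite Rabs_Ropp. lra.
Qed.

Definition closed_span (D : X -> Prop) (w : X) : Prop :=
  forall S, subspace S -> hclosed_set S -> (forall d, D d -> S d) -> S w.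

Lemma closed_span_subspace D : subspace (closed_span D).
Proof.
  split; [|split]; intros; intros S HS HSc HSD.
  - apply HS.
  - apply HS; [apply H|apply H0]; auto.
  - apply HS; apply H; auto.
Qed.

Lemma closed_span_closed D : hclosed_set (closed_span D).
Proof. intros s l Hs Hl S HS HSc HSD. apply (HSc s l); auto. intro n; apply Hs; auto. Qed.

(* If ⟨u_n, d⟩ converges for all d in a set D containing every u_n, it
   converges for every w: project w onto the closed span of D. *)
Lemma conv_dirs_everywhere (u : nat -> X) M (D : X -> Prop) :
  (forall n, hnorm (u n) <= M) -> (forall n, D (u n)) ->
  (forall d, D d -> conv_dirs u d) -> forall w, conv_dirs u w.
Proof.
  intros HM HDu HD w. set (V := closed_span D).
  destruct (proj_exists V w (closed_span_closed D) (subspace_convex V (closed_span_subspace D))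
              (ex_intro _ hzero (proj1 (closed_span_subspace D)))) as [p Hp].
  destruct (proj1 Hp (conv_dirs u) (conv_dirs_subspace u) (conv_dirs_closed u M HM) HD)
    as [l Hl].
  exists l. apply (Un_cv_ext (fun n => hinner (u n) p)); auto. intro n.
  assert (Vu : V (u n)) by (intros S _ _ HSD; apply HSD, HDu).
  pose proof (subspace_orth V w p (closed_span_subspace D) Hp (u n) Vu) as O.
  inner_expand_in O. lra.
Qed.

(* Bounded sequences have weak cluster points: extract a subsequence along
   which every ⟨x_n, x_k⟩ converges, extend convergence to all directions, and
   represent the limit functional. *)
Lemma weak_compact (x : nat -> X) M :
  (forall n, hnorm (x n) <= M) -> exists y, weak_cluster_point x y.
Proof.
  intro HM.
  assert (M0 : 0 <= M) by (pose proof (hnorm_pos (x O)); specialize (HM O); lra).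
  destruct (diagonal (fun k n => hinner (x n) (x k)) (M * M)) as [phi [Hphi Hcv]].
  { intros k n. eapply Rle_trans. apply cauchy_schwarz.
    pose proof (hnorm_pos (x n)). pose proof (hnorm_pos (x k)).
    pose proof (HM n); pose proof (HM k). nra. }
  set (u := fun n => x (phi n)).
  assert (HMu : forall n, hnorm (u n) <= M) by (intro; apply HM).
  assert (Hall : forall w, conv_dirs u w).
  { apply (conv_dirs_everywhere u M (fun d => exists k, d = x k) HMu).
    - intro n. exists (phi n). reflexivity.
    - intros d [k ->]. apply Hcv. }
  pose (lim := fun w => proj1_sig (constructive_indefinite_description _ (Hall w))).
  destruct (weak_limit_represented u M lim HMu) as [y Hy].
  { intro w. unfold lim. destruct (constructive_indefinite_description _ _). auto. }
  exists y, phi. split; auto.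
Qed.

Lemma cluster_point_of_subseq (x : nat -> X) psi y : sincr psi ->
  weak_cluster_point (fun n => x (psi n)) y -> weak_cluster_point x y.
Proof.
  intros Hp [phi [H1 H2]]. exists (fun n => psi (phi n)). split; auto.
  apply sincr_comp; auto.
Qed.
End WeakCompactness.

Section Convergence.
Context {X : Hilbert}.
Implicit Types x y p : X.

(* If ‖x_n - y‖ converges for the cluster points y0, y1, they coincide: the
   difference of the two squared distances is affine in ⟨x_n, y1 - y0⟩. *)
Lemma cluster_points_unique (x : nat -> X) y0 y1 :
  (forall y, weak_cluster_point x y ->
     exists L, Un_cv (fun n => hinner (hsub (x n) y) (hsub (x n) y)) L) ->
  weak_cluster_point x y0 -> weak_cluster_point x y1 -> y0 = y1.
Proof.
  intros HL H0 H1.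
  destruct (HL y0 H0) as [L0 HL0]. destruct (HL y1 H1) as [L1 HL1].
  assert (Hc : Un_cv (fun n => hinner (x n) (hsub y1 y0))
       ((L0 - L1 - hinner y0 y0 + hinner y1 y1) / 2)).
  { apply (Un_cv_ext (fun n => (hinner (hsub (x n) y0) (hsub (x n) y0)
        - hinner (hsub (x n) y1) (hsub (x n) y1) - hinner y0 y0 + hinner y1 y1) / 2)).
    { intro n. inner_expand. rewrite (hinner_sym y0 (x n)), (hinner_sym y1 (x n)). field. }
    unfold Rdiv. apply CV_mult; [|apply Un_cv_const].
    apply CV_plus; [apply CV_minus; [apply CV_minus; auto|]|]; apply Un_cv_const. }
  destruct H0 as [phi0 [Hp0 Hw0]]. destruct H1 as [phi1 [Hp1 Hw1]].
  pose proof (UL_sequence _ _ _ (Hw0 (hsub y1 y0)) (Un_cv_subseq _ _ _ Hc Hp0)) as E0.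
  pose proof (UL_sequence _ _ _ (Hw1 (hsub y1 y0)) (Un_cv_subseq _ _ _ Hc Hp1)) as E1.
  assert (E : hinner (hsub y1 y0) (hsub y1 y0) = 0).
  { replace (hinner (hsub y1 y0) (hsub y1 y0))
      with (hinner y1 (hsub y1 y0) - hinner y0 (hsub y1 y0)) by (inner_expand; ring). lra. }
  apply hinner_def in E. apply vec_ext. intro w.
  assert (Ew : hinner (hsub y1 y0) w = 0) by (rewrite E; apply inner_zero_l).
  inner_expand_in Ew. lra.
Qed.

(* A bounded sequence whose only weak cluster point is y0 converges weakly
   to y0: otherwise a subsequence stays away from y0 in some direction w, and
   a weak cluster point of that subsequence gives a contradiction. *)
Lemma weak_cv_of_unique_cluster (x : nat -> X) M y0 : (forall n, hnorm (x n) <= M) ->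
  (forall y, weak_cluster_point x y -> y = y0) -> weak_cv x y0.
Proof.
  intros HM Huniq w. apply NNPP. intro Hn.
  assert (Hd : exists d, d > 0 /\ forall N, exists n, (N <= n)%nat /\
     d <= Rabs (hinner (x n) w - hinner y0 w)).
  { apply NNPP. intro Hno. apply Hn. intros eps He. apply NNPP. intro Hne.
    apply Hno. exists eps. split; auto. apply not_eventually. intros [N HN]. apply Hne.
    exists N. intros n Hnn. unfold Rdist. apply Rnot_le_lt, HN, Hnn. }
  destruct Hd as [d [Hd HdN]].
  destruct (extract_sub _ HdN) as [psi [Hpsi Hfar]].
  destruct (weak_compact (fun n => x (psi n)) M) as [y1 Hy1]. intro; apply HM.
  assert (E : y1 = y0) by (apply Huniq; eapply cluster_point_of_subseq; eauto). subst y1.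
  destruct Hy1 as [phi [Hphi Hwc]].
  destruct (Hwc w d Hd) as [N HN]. specialize (HN N (le_n _)). specialize (Hfar (phi N)).
  unfold Rdist in HN. lra.
Qed.

Lemma opial (x : nat -> X) (F : X -> Prop) M : (forall n, hnorm (x n) <= M) ->
  (forall y, F y -> exists L, Un_cv (fun n => hinner (hsub (x n) y) (hsub (x n) y)) L) ->
  (forall y, weak_cluster_point x y -> F y) -> exists p, F p /\ weak_cv x p.
Proof.
  intros HM HL Hw. destruct (weak_compact x M HM) as [y0 Hy0].
  exists y0. split; auto. apply (weak_cv_of_unique_cluster x M); auto.
  intros y Hy. apply (cluster_points_unique x); auto.
Qed.

Lemma weak_limit_dist_le (v : nat -> X) y x0 r : weak_cv v y ->
  (forall j, hnorm (hsub (v j) x0) <= r) -> hnorm (hsub y x0) <= r.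
Proof.
  intros Hw Hr.
  assert (Hle : hinner y (hsub y x0) <= r * hnorm (hsub y x0) + hinner x0 (hsub y x0)).
  { apply (Un_cv_le _ _ _ (Hw (hsub y x0))). intro j.
    replace (hinner (v j) (hsub y x0))
      with (hinner (hsub (v j) x0) (hsub y x0) + hinner x0 (hsub y x0)) by (inner_expand; ring).
    pose proof (inner_le_norms (hsub (v j) x0) (hsub y x0)).
    pose proof (hnorm_pos (hsub y x0)). pose proof (Hr j).
    assert (hnorm (hsub (v j) x0) * hnorm (hsub y x0) <= r * hnorm (hsub y x0))
      by (apply Rmult_le_compat_r; auto). lra. }
  assert (E : hinner (hsub y x0) (hsub y x0) = hinner y (hsub y x0) - hinner x0 (hsub y x0))
    by (inner_expand; ring).
  rewrite <- hnorm_sq in E. pose proof (hnorm_pos (hsub y x0)).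
  destruct (Req_dec (hnorm (hsub y x0)) 0) as [E0|].
  - pose proof (hnorm_pos (hsub (v O) x0)). pose proof (Hr O). lra.
  - apply (Rmult_le_reg_r (hnorm (hsub y x0))); lra.
Qed.

(* Kadec–Klee: weak convergence to p together with ‖v_j - x0‖ ≤ ‖p - x0‖
   yields strong convergence, since
   ‖v_j - p‖² ≤ 2⟨p - v_j, p - x0⟩ → 0. *)
Lemma strong_cv_of_weak_cv (v : nat -> X) p x0 : weak_cv v p ->
  (forall j, hnorm (hsub (v j) x0) <= hnorm (hsub p x0)) -> strong_cv v p.
Proof.
  intros Hw Hle. apply strong_cv_iff. intros eps He.
  destruct (Hw (hsub p x0) (eps * eps / 4)) as [N HN]; [nra|].
  exists N. intros n Hn. specialize (HN n Hn). unfold Rdist in HN. apply Rabs_def2 in HN.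
  apply hnorm_lt_c; [lra|].
  assert (E : hinner (hsub (v n) p) (hsub (v n) p) = hinner (hsub (v n) x0) (hsub (v n) x0)
     - 2 * (hinner (v n) (hsub p x0) - hinner p (hsub p x0))
     - hinner (hsub p x0) (hsub p x0)).
  { inner_expand. rewrite ?(hinner_sym x0 (v n)), ?(hinner_sym p (v n)), ?(hinner_sym x0 p).
    ring. }
  pose proof (hnorm_le_inv _ _ (Hle n)). nra.
Qed.

Lemma strong_cv_of_subseqs (x : nat -> X) p :
  (forall psi, sincr psi -> exists phi, sincr phi /\ strong_cv (fun j => x (psi (phi j))) p) ->
  strong_cv x p.
Proof.
  intro Hsub. apply strong_cv_iff. intros eps He. apply NNPP. intro Hno.
  assert (Hfar : forall N, exists n, (N <= n)%nat /\ eps <= hnorm (hsub (x n) p)).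
  { apply not_eventually. intros [N HN]. apply Hno. exists N. intros n Hn.
    apply Rnot_le_lt, HN, Hn. }
  destruct (extract_sub _ Hfar) as [psi [Hpsi Hpsi2]].
  destruct (Hsub psi Hpsi) as [phi [_ Hcv]].
  destruct (proj1 (strong_cv_iff _ _) Hcv eps He) as [N HN].
  specialize (HN N (le_n _)). specialize (Hpsi2 (phi N)). lra.
Qed.
End Convergence.

Section RelaxedIteration.
Context {X : Hilbert}.

Lemma relaxed_step_fejer (a t z : X) lam : 0 <= lam -> Hs a t z ->
  let y := hadd a (hscal lam (hsub t a)) in
  hinner (hsub y z) (hsub y z) + lam * (2 - lam) * hinner (hsub a t) (hsub a t)
  <= hinner (hsub a z) (hsub a z).
Proof.
  intros Hlam Hz y. unfold Hs in Hz.
  assert (E : hinner (hsub y z) (hsub y z) + lam * (2 - lam) * hinner (hsub a t) (hsub a t)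
     = hinner (hsub a z) (hsub a z) + 2 * lam * hinner (hsub z t) (hsub a t)).
  { unfold y. inner_expand. rewrite ?(hinner_sym t a), ?(hinner_sym z a), ?(hinner_sym z t).
    ring. }
  rewrite E. nra.
Qed.

Lemma relaxed_iteration_weak_cv (F : X -> Prop) (T : nat -> X -> X) (HT : coherent F T) :
  (exists z, F z) ->
  forall (eps : R) (x0 : X), 0 < eps <= 1 ->
  forall x : nat -> X, x 0%nat = x0 ->
    (forall n, x (S n) = hadd (x n) (hscal (2 - eps) (hsub (T n (x n)) (x n)))) ->
    exists p, F p /\ weak_cv x p.
Proof.
  intros [z0 Hz0] eps x0 Heps x Hx0 Hrec.
  set (lam := 2 - eps). assert (Hlam : 1 <= lam) by (unfold lam; lra).
  set (d := fun n => hinner (hsub (x n) (T n (x n))) (hsub (x n) (T n (x n)))).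
  assert (Fejer : forall z, F z -> forall n,
    hinner (hsub (x (S n)) z) (hsub (x (S n)) z) + lam * eps * d n
    <= hinner (hsub (x n) z) (hsub (x n) z)).
  { intros z Hz n. rewrite Hrec. replace (lam * eps) with (lam * (2 - lam)) by (unfold lam; ring).
    apply relaxed_step_fejer; [lra|]. apply (proj1 HT); auto. }
  assert (Hd : forall n, 0 <= lam * eps * d n).
  { intro n. apply Rmult_le_pos; [nra|apply hinner_pos]. }
  assert (Mono : forall z, F z -> forall n,
     hinner (hsub (x (S n)) z) (hsub (x (S n)) z) <= hinner (hsub (x n) z) (hsub (x n) z)).
  { intros z Hz n. pose proof (Fejer z Hz n). pose proof (Hd n). lra. }
  set (M := hnorm (hsub x0 z0) + hnorm z0).
  assert (HM : forall n, hnorm (x n) <= M).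
  { intro n. eapply Rle_trans; [apply (hnorm_le_sub _ z0)|]. apply Rplus_le_compat_r.
    apply hnorm_le. rewrite <- Hx0.
    apply (anti_le (fun n => hinner (hsub (x n) z0) (hsub (x n) z0))); [apply Mono; auto|lia]. }
  (* both series telescope against ‖x_n - z0‖² *)
  set (b := fun n => hinner (hsub (x n) z0) (hsub (x n) z0)).
  assert (Hb : forall n, 0 <= b n) by (intro; apply hinner_pos).
  apply (opial x F M HM).
  - intros y Hy. apply anti_cv; [apply Mono; auto|intro; apply hinner_pos].
  - apply (proj2 HT); [exists M; auto| |].
    + apply (telescope_summable _ b (eps / lam)); auto.
      { apply Rdiv_lt_0_compat; lra. } { intro; apply pow2_ge_0. }
      intro n. rewrite hnorm_pow2. pose proof (Fejer z0 Hz0 n). unfold b.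
      replace (eps / lam * hinner (hsub (x (S n)) (x n)) (hsub (x (S n)) (x n)))
        with (lam * eps * d n); [lra|].
      unfold d. rewrite Hrec. fold lam. inner_expand.
      rewrite ?(hinner_sym (T n (x n)) (x n)). field. lra.
    + apply (telescope_summable _ b (lam * eps)); auto.
      { apply Rmult_lt_0_compat; lra. } { intro; apply pow2_ge_0. }
      intro n. rewrite hnorm_pow2. pose proof (Fejer z0 Hz0 n). unfold b, d in *. lra.
Qed.
End RelaxedIteration.

Section QIteration.
Context {X : Hilbert}.
Implicit Types a b c d p t : X.

Lemma Hs_closed a b : hclosed_set (Hs a b).
Proof.
  intros s l Hs0 Hl. pose proof (proj1 (strong_cv_iff _ _) Hl) as Hl'. unfold Hs in *.
  apply Rnot_lt_le. intro Hg.
  set (g := hinner (hsub l b) (hsub a b)) in *.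
  set (r := hnorm (hsub a b)). assert (Hr : 0 <= r) by apply hnorm_pos.
  destruct (Hl' (g / (r + 1))) as [N HN]; [apply Rdiv_lt_0_compat; lra|].
  specialize (HN N (le_n _)). specialize (Hs0 N).
  (* ⟨s_N - b, a - b⟩ ≥ g - ‖s_N - l‖ r > 0 *)
  pose proof (inner_ge_norms (hsub (s N) l) (hsub a b)).
  assert (E : hinner (hsub (s N) l) (hsub a b) = hinner (hsub (s N) b) (hsub a b) - g)
    by (unfold g; inner_expand; ring).
  pose proof (hnorm_pos (hsub (s N) l)).
  assert (hnorm (hsub (s N) l) * r <= g / (r + 1) * r) by (apply Rmult_le_compat_r; lra).
  assert (g / (r + 1) * r < g).
  { apply (Rmult_lt_reg_r (r + 1)); [lra|]. field_simplify; lra. }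
  fold r in H. lra.
Qed.

Lemma Hs_convex a b : hconvex_set (Hs a b).
Proof.
  intros u v t Hu Hv Ht. unfold Hs in *.
  replace (hinner (hsub (hadd (hscal (1 - t) u) (hscal t v)) b) (hsub a b))
    with ((1 - t) * hinner (hsub u b) (hsub a b) + t * hinner (hsub v b) (hsub a b))
    by (inner_expand; ring).
  nra.
Qed.

(* H(a,a) is the whole space: the run starts with H(x0,x0). *)
Lemma Hs_self a w : Hs a a w.
Proof. unfold Hs. rewrite hsub_self, inner_zero_r. lra. Qed.

Lemma Hs2_closed a b c d : hclosed_set (fun w => Hs a b w /\ Hs c d w).
Proof.
  intros s l Hs0 Hl. split; [apply (Hs_closed a b s)|apply (Hs_closed c d s)]; auto;
    intro n; apply Hs0.
Qed.

Lemma Hs2_convex a b c d : hconvex_set (fun w => Hs a b w /\ Hs c d w).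
Proof. intros u v t [] [] Ht. split; apply Hs_convex; auto. Qed.

Lemma Hs_step_gain x0 a p : Hs x0 a p ->
  hinner (hsub a x0) (hsub a x0) + hinner (hsub p a) (hsub p a) <= hinner (hsub p x0) (hsub p x0).
Proof.
  unfold Hs. intro H.
  assert (E : hinner (hsub p x0) (hsub p x0) = hinner (hsub a x0) (hsub a x0)
    + hinner (hsub p a) (hsub p a) - 2 * hinner (hsub p a) (hsub x0 a)).
  { inner_expand. rewrite ?(hinner_sym x0 a), ?(hinner_sym a p), ?(hinner_sym x0 p). ring. }
  lra.
Qed.

Lemma Hs_step_displacement a t p : Hs a t p ->
  hinner (hsub a t) (hsub a t) <= hinner (hsub p a) (hsub p a).
Proof.
  unfold Hs. intro H.
  assert (E : hinner (hsub p t) (hsub a t) =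
    hinner (hsub p a) (hsub a t) + hinner (hsub a t) (hsub a t)) by (inner_expand; ring).
  pose proof (inner_ge_norms (hsub p a) (hsub a t)).
  rewrite <- !hnorm_sq in *. set (s := hnorm (hsub a t)) in *.
  set (D := hnorm (hsub p a)) in *.
  assert (0 <= s) by apply hnorm_pos. assert (0 <= D) by apply hnorm_pos.
  assert (s <= D). { destruct (Req_dec s 0). lra. apply (Rmult_le_reg_r s); nra. }
  nra.
Qed.

(* Runs exist: iterate a choice of Q until the first empty intersection. *)
Lemma run_exists (T : nat -> X -> X) x0 : exists x N, Q_run T x0 x N.
Proof.
  pose (next := fun n a => epsilon (inhabits x0) (fun p => is_Q x0 a (T n a) p)).
  pose (x := fix xs n := match n with O => x0 | S m => next m (xs m) end).
  pose (empty := fun m => ~ exists w, Hs x0 (x m) w /\ Hs (x m) (T m (x m)) w).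
  assert (Hstep : forall n, ~ empty n -> is_Q x0 (x n) (T n (x n)) (x (S n))).
  { intros n Hn. apply (epsilon_spec (inhabits x0) (fun p => is_Q x0 (x n) (T n (x n)) p)).
    apply proj_exists; [apply Hs2_closed|apply Hs2_convex|apply NNPP; exact Hn]. }
  destruct (classic (exists m, empty m)) as [He|He].
  - destruct (least_ex _ He) as [m0 [Hm0 Hmin]]. exists x, (Some m0).
    split; [reflexivity|split].
    + intros n Hn. apply Hstep, Hmin, Hn. reflexivity.
    + intros m Hm. injection Hm as <-. exact Hm0.
  - exists x, None. split; [reflexivity|split].
    + intros n _. apply Hstep. intro. apply He; eauto.
    + intros m Hm; discriminate.
Qed.

Section Run.
Variables (F : X -> Prop) (T : nat -> X -> X).
Hypothesis HT : coherent F T.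

(* F ⊂ H(x0, x_n) as long as the run is defined: Q projects x0 onto a set
   containing F, so F lies in the half-space H(x0, x_{n+1}). *)
Lemma F_in_Hs x0 x N : Q_run T x0 x N -> forall n, (forall m, N = Some m -> (n <= m)%nat) ->
  forall z, F z -> Hs x0 (x n) z.
Proof.
  intros [H0 [Hq _]] n. induction n; intros Hn z Hz.
  - rewrite H0. apply Hs_self.
  - assert (Hlt : forall m, N = Some m -> (n < m)%nat) by (intros m Hm; specialize (Hn m Hm); lia).
    apply (proj_var _ _ _ _ (Hs2_convex _ _ _ _) (Hq n Hlt)). split.
    + apply IHn; auto. intros m Hm. specialize (Hn m Hm). lia.
    + apply (proj1 HT); auto.
Qed.

(* When F ≠ ∅ the intersection H(x0,x_n) ∩ H(x_n,T_n x_n) always contains F. *)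
Lemma run_never_terminates x0 x N : (exists z, F z) -> Q_run T x0 x N -> N = None.
Proof.
  intros [z Hz] Hr. destruct N as [m|]; auto. exfalso.
  apply (proj2 (proj2 Hr) m eq_refl). exists z. split.
  - apply (F_in_Hs x0 x (Some m) Hr m); auto. intros m' Hm'. injection Hm' as <-. lia.
  - apply (proj1 HT); auto.
Qed.

Lemma run_step x0 x : Q_run T x0 x None -> forall n, is_Q x0 (x n) (T n (x n)) (x (S n)).
Proof. intros [_ [Hq _]] n. apply Hq. discriminate. Qed.

Lemma run_mono x0 x : Q_run T x0 x None -> forall n,
  hinner (hsub (x n) x0) (hsub (x n) x0) <= hinner (hsub (x (S n)) x0) (hsub (x (S n)) x0).
Proof.
  intros Hr n. pose proof (Hs_step_gain x0 (x n) (x (S n)) (proj1 (proj1 (run_step x0 x Hr n)))).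
  pose proof (hinner_pos (hsub (x (S n)) (x n))). lra.
Qed.

Lemma run_dist_bound x0 x z : Q_run T x0 x None -> F z ->
  forall n, hnorm (hsub (x n) x0) <= hnorm (hsub z x0).
Proof.
  intros Hr Hz [|n].
  - rewrite (proj1 Hr), hsub_self. apply hnorm_le. rewrite inner_zero_l. apply hinner_pos.
  - rewrite !(hnorm_sub_sym _ x0). apply (proj2 (run_step x0 x Hr n)). split.
    + apply (F_in_Hs x0 x None Hr n); [discriminate|auto].
    + apply (proj1 HT). auto.
Qed.

(* A run at bounded distance from x0 is bounded and has summable steps and
   residuals (telescoping against r² - ‖x_n - x0‖²), so coherence puts its
   weak cluster points in F. *)
Lemma run_cluster_in_F x0 x r : Q_run T x0 x None ->
  (forall n, hnorm (hsub (x n) x0) <= r) ->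
  (forall n, hnorm (x n) <= r + hnorm x0) /\ (forall y, weak_cluster_point x y -> F y).
Proof.
  intros Hr Hbd.
  assert (Hbd' : forall n, hnorm (x n) <= r + hnorm x0).
  { intro n. pose proof (hnorm_le_sub (x n) x0). pose proof (Hbd n). lra. }
  split; auto.
  set (b := fun n => r * r - hinner (hsub (x n) x0) (hsub (x n) x0)).
  assert (Hb : forall n, 0 <= b n).
  { intro n. unfold b. rewrite <- hnorm_sq.
    pose proof (hnorm_pos (hsub (x n) x0)). pose proof (Hbd n). nra. }
  assert (Hgain : forall n, hinner (hsub (x (S n)) (x n)) (hsub (x (S n)) (x n)) <= b n - b (S n)).
  { intro n. unfold b. pose proof (Hs_step_gain x0 (x n) (x (S n))
                                    (proj1 (proj1 (run_step x0 x Hr n)))). lra. }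
  apply (proj2 HT); [exists (r + hnorm x0); auto| |].
  - apply (telescope_summable _ b 1); auto; [lra|intro; apply pow2_ge_0|].
    intro n. rewrite hnorm_pow2. specialize (Hgain n). lra.
  - apply (telescope_summable _ b 1); auto; [lra|intro; apply pow2_ge_0|].
    intro n. rewrite hnorm_pow2. specialize (Hgain n).
    pose proof (Hs_step_displacement (x n) (T n (x n)) (x (S n))
                                     (proj2 (proj1 (run_step x0 x Hr n)))). lra.
Qed.

(* Case F ≠ ∅: every subsequence has a subsequence converging weakly to a
   point y of F with ‖y - x0‖ ≤ ‖P_F x0 - x0‖, so y = P_F x0, and Kadec–Klee
   upgrades the convergence to strong convergence. *)
Lemma run_strong_cv x0 x p : hconvex_set F -> Q_run T x0 x None -> is_proj F x0 p ->
  strong_cv x p.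
Proof.
  intros HFv Hr Hp.
  pose proof (run_dist_bound x0 x p Hr (proj1 Hp)) as Hbd.
  destruct (run_cluster_in_F x0 x _ Hr Hbd) as [HM Hw].
  apply strong_cv_of_subseqs. intros psi Hpsi.
  destruct (weak_compact (fun n => x (psi n)) _ (fun n => HM (psi n))) as [y Hy].
  assert (Fy : F y) by (apply Hw; eapply cluster_point_of_subseq; eauto).
  destruct Hy as [phi [Hphi Hwc]]. exists phi. split; auto.
  assert (Hyx : hnorm (hsub y x0) <= hnorm (hsub p x0))
    by (apply (weak_limit_dist_le _ _ _ _ Hwc); intro; apply Hbd).
  assert (Hyp : y = p).
  { apply (proj_unique F x0 y p HFv); auto. split; auto. intros q Hq.
    rewrite hnorm_sub_sym. eapply Rle_trans; [apply Hyx|].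
    rewrite hnorm_sub_sym. apply (proj2 Hp q Hq). }
  subst y. apply (strong_cv_of_weak_cv _ p x0 Hwc). intro; apply Hbd.
Qed.

(* Case F = ∅: a run that does not terminate is unbounded; since ‖x_n - x0‖
   is monotone, otherwise it would be bounded with a cluster point in F. *)
Lemma run_unbounded x0 x : ~ (exists z, F z) -> Q_run T x0 x None ->
  cv_infty (fun n => hnorm (x n)).
Proof.
  intros HF Hr M. apply NNPP. intro Hno.
  assert (Hinf : forall N0, exists n, (N0 <= n)%nat /\ hnorm (x n) <= M).
  { apply not_eventually. intros [N0 HN0]. apply Hno. exists N0. intros n Hn.
    apply Rnot_le_lt, HN0, Hn. }
  assert (Hbd : forall n, hnorm (hsub (x n) x0) <= M + hnorm x0).
  { intro n. destruct (Hinf n) as [m [Hm1 Hm2]].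
    apply Rle_trans with (hnorm (hsub (x m) x0)).
    - apply hnorm_le, (mono_le (fun n => hinner (hsub (x n) x0) (hsub (x n) x0))); auto.
      apply (run_mono x0 x Hr).
    - unfold hsub. eapply Rle_trans; [apply hnorm_tri|]. rewrite hnorm_opp. lra. }
  destruct (run_cluster_in_F x0 x _ Hr Hbd) as [HM Hw].
  destruct (weak_compact x _ HM) as [y Hy]. apply HF. exists y. auto.
Qed.

Lemma run_cases x0 x N : hclosed_set F -> hconvex_set F -> Q_run T x0 x N ->
  ( (exists z, F z) /\ N = None /\ exists p, is_proj F x0 p /\ strong_cv x p )
  \/ ( (~ exists z, F z) /\ N = None /\ cv_infty (fun n => hnorm (x n)) )
  \/ ( (~ exists z, F z) /\ N <> None ).
Proof.
  intros HFc HFv Hr. destruct (classic (exists z, F z)) as [HF|HF].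
  - left. pose proof (run_never_terminates x0 x N HF Hr) as HN. subst N.
    destruct (proj_exists F x0 HFc HFv HF) as [p Hp].
    repeat split; auto. exists p. split; auto. apply (run_strong_cv x0); auto.
  - right. destruct N as [m|].
    + right. split; auto. discriminate.
    + left. repeat split; auto. apply (run_unbounded x0); auto.
Qed.
End Run.
End QIteration.

Theorem theorem10 (X : Hilbert) (F : X -> Prop) (T : nat -> X -> X)
  (HFc : hclosed_set F) (HFv : hconvex_set F) (HT : coherent F T) :
  ( (exists z, F z) ->
    forall (eps : R) (x0 : X), 0 < eps <= 1 ->
    forall x : nat -> X, x 0%nat = x0 ->
      (forall n, x (S n) = hadd (x n) (hscal (2 - eps) (hsub (T n (x n)) (x n)))) ->
      exists p, F p /\ weak_cv x p )
  /\
  ( forall x0 : X,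
      (exists (x : nat -> X) (N : option nat), Q_run T x0 x N) /\
      (forall (x : nat -> X) (N : option nat), Q_run T x0 x N ->
         ( (exists z, F z) /\ N = None /\
             exists p, is_proj F x0 p /\ strong_cv x p )
         \/ ( (~ exists z, F z) /\ N = None /\ cv_infty (fun n => hnorm (x n)) )
         \/ ( (~ exists z, F z) /\ N <> None )) ).
Proof.
  split.
  - apply (relaxed_iteration_weak_cv F T HT).
  - intro x0. split.
    + apply run_exists.
    + intros x N Hr. apply (run_cases F T HT x0 x N HFc HFv Hr).
Qed.
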